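(* $m_4(5)\geq 6$. Specifically, let $X_0,X_1,X_2$ be pairwise disjoint copies of $\{0,1,2,3,4\}$, let $\mathcal P_j$ be the copy in $X_j$ of the pentagon $\mathcal P=\{\{i,i+1\}: i\in\mathbb Z_5\}$ and $\mathcal R_j$ the copy in $X_j$ of $\mathcal R=\{\{i,i+1,i+3\}: i\in\mathbb Z_5\}$ (indices mod 5). Let \[ \mathcal H=(\mathcal P_0\times\mathcal R_1)\cup(\mathcal P_1\times\mathcal R_2)\cup(\mathcal P_2\times\mathcal R_0), \] where $\mathcal P_a\times\mathcal R_b=\{P\cup R: P\in\mathcal P_a, R\in\mathcal R_b\}$. Then $\mathcal H$ is a $5$-uniform intersecting family with $|\mathcal H|=75$ and $|\{H\in\mathcal H: H\cap Y=\emptyset\}|\ge 6$ for every $4$-set $Y\subset X_0\cup X_1\cup X_2$; moreover $\tau(\mathcal H)=5$.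
   Context: A family is intersecting if any two members intersect; $\tau$ is the minimum size of a set meeting all members. $m_j(k)$ is the maximum of $\gamma_j(\mathcal F)=\min_{|S|=j}|\{F\in\mathcal F:F\cap S=\emptyset\}|$ over all intersecting $k$-uniform families $\mathcal F$ (on any finite ground set) with $\tau(\mathcal F)=k$. *)

From mathcomp Require Import all_boot.
Set Implicit Arguments. Unset Strict Implicit. Unset Printing Implicit Defensive.

Definition uniform (T : finType) (k : nat) (F : {set {set T}}) : Prop :=
  forall A, A \in F -> #|A| = k.

Definition intersecting (T : finType) (F : {set {set T}}) : Prop :=
  forall A B, A \in F -> B \in F -> A :&: B != set0.

Definition cover (T : finType) (F : {set {set T}}) (S : {set T}) : bool :=
  [forall A in F, A :&: S != set0].

(* tau F = minimum size of a set meeting all members of F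
   (default #|T| if there is no such set, which cannot happen when
   set0 \notin F). *)
Definition tau (T : finType) (F : {set {set T}}) : nat :=
  \big[minn/#|T|]_(S : {set T} | cover F S) #|S|.

Definition avoid_count (T : finType) (F : {set {set T}}) (S : {set T}) : nat :=
  #|[set A in F | [disjoint A & S]]|.

(* The construction: ground set X_0 u X_1 u X_2, element (j, i) is the
   copy of i in X_j. *)
Definition Gr := ('I_3 * 'I_5)%type.

Definition add5 (i : 'I_5) (k : nat) : 'I_5 := inord ((i + k) %% 5).
Definition add3 (j : 'I_3) (k : nat) : 'I_3 := inord ((j + k) %% 3).

Definition Pj (j : 'I_3) : {set {set Gr}} :=
  [set [set (j, i); (j, add5 i 1)] | i : 'I_5].

Definition Rj (j : 'I_3) : {set {set Gr}} :=
  [set [set (j, i); (j, add5 i 1); (j, add5 i 3)] | i : 'I_5].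

Definition prodfam (A B : {set {set Gr}}) : {set {set Gr}} :=
  [set P :|: R | P in A, R in B].

Definition Hfam : {set {set Gr}} :=
  \bigcup_(j : 'I_3) prodfam (Pj j) (Rj (add3 j 1)).

From Pilot Require Import Defs.
From mathcomp Require Import all_boot zify.
Set Implicit Arguments. Unset Strict Implicit. Unset Printing Implicit Defensive.

(* General part: for any family F on a finite ground set T, S covers F iff no
   member of F avoids S, the number of members avoiding S can only drop when S
   grows, and every set of size <= k extends to a k-set.  Hence, if every k-set
   (k < |T|) is avoided by some member, then tau F > k; and tau F <= |S| for
   every cover S.
   Specific part: the members of H are indexed injectively by triples
   ((j, i), i') : the edge {i, i+1} of P_j joined with the triangle
   {i', i'+1, i'+3} of R_{j+1}.  Running through explicit duplicate-free lists
   of the 15 points and the 75 triples, finite computations certify that the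
   members are 5-sets, pairwise intersecting and distinct, that a given 5-set
   is a cover, and that every 4-set is avoided by at least 6 members; for the
   last check a 4-set is presented by its sorted list of point codes, so only
   nondecreasing quadruples of codes are inspected.  With k = 4 the general
   part then gives tau H = 5. *)

Lemma big_minn_le (I : eqType) (r : seq I) (P : pred I) (w : I -> nat) m i0 :
  i0 \in r -> P i0 -> \big[minn/m]_(i <- r | P i) w i <= w i0.
Proof.
elim: r => // i r IHr; rewrite in_cons big_cons => /orP[/eqP <- -> | i0r Pi0].
  exact: geq_minl.
by case: (P i); rewrite ?geq_min IHr ?orbT.
Qed.

Lemma set_extend (T : finType) (S : {set T}) k :
  #|S| <= k <= #|T| -> exists2 Y : {set T}, S \subset Y & #|Y| = k.
Proof.
move=> /andP[leSk lekT]; move defn: (k - #|S|) => n.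
elim: n S defn leSk => [|n IHn] S defn leSk.
  by exists S => //; lia.
have [x xS] : exists x, x \in ~: S.
  by apply/card_gt0P; have := cardsC S; lia.
have leSxk : #|x |: S| <= k by rewrite cardsU1 -in_setC xS; lia.
have [|Y sSxY cardY] := IHn (x |: S) _ leSxk.
  by rewrite cardsU1 -in_setC xS; lia.
by exists Y => //; apply: subset_trans sSxY; apply: subsetUr.
Qed.

Lemma card_count (T : finType) (s : seq T) (P : pred T) :
  uniq s -> (forall x, x \in s) -> #|P| = count P s.
Proof.
move=> s_uniq s_full; rewrite -size_filter.
have /card_uniqP <- := filter_uniq P s_uniq.
by apply: eq_card => x; rewrite mem_filter s_full andbT.
Qed.

Section Transversals.
Variables (T : finType) (F : {set {set T}}).

(* S meets every member iff no member avoids S.  ([Defs.cover] is qualified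
   because finset also defines a [cover].) *)
Lemma cover_avoid0 (S : {set T}) : Defs.cover F S = (avoid_count F S == 0).
Proof.
rewrite /avoid_count cards_eq0; apply/forallP/eqP => [coverS | noneS A].
- apply/setP => A; rewrite !inE -setI_eq0; apply/negbTE; rewrite negb_and.
  by have := coverS A; rewrite implybE.
- apply/implyP => AF; rewrite setI_eq0; apply/negP => disjAS.
  by have := in_set0 A; rewrite -noneS inE AF disjAS.
Qed.

Lemma avoid_countS (S Y : {set T}) : S \subset Y -> avoid_count F Y <= avoid_count F S.
Proof.
move=> sSY; apply/subset_leq_card/subsetP => A; rewrite !inE => /andP[-> disjAY].
exact: disjointWr disjAY.
Qed.

Lemma tau_le_cover (S : {set T}) : Defs.cover F S -> tau F <= #|S|.
Proof. exact: big_minn_le (mem_index_enum S). Qed.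

(* ... and it exceeds k as soon as every k-set is avoided by some member,
   since a cover of size <= k would extend to a k-set that is still a cover. *)
Lemma tau_gt k :
  k < #|T| -> (forall Y : {set T}, #|Y| = k -> 0 < avoid_count F Y) -> k < tau F.
Proof.
move=> ltkT avoidY; rewrite /tau.
apply: (big_ind (fun n => k < n)) => // [m n ltkm ltkn | S coverS].
  by rewrite leq_min ltkm.
rewrite ltnNge; apply/negP => leSk.
have [Y sSY cardY] : exists2 Y : {set T}, S \subset Y & #|Y| = k.
  by apply: set_extend; rewrite leSk ltnW.
move: coverS; rewrite cover_avoid0 => /eqP avoid0.
have := leq_trans (avoidY Y cardY) (avoid_countS sSY).
by rewrite avoid0.
Qed.

End Transversals.

(* Computable arithmetic in Z_(n+1): [ord_mod n m] is m mod (n+1).  Unlike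
   [inord] (used by [add5], [add3]) it reduces under [vm_compute]. *)
Definition ord_mod n m : 'I_n.+1 := Ordinal (ltn_pmod m (ltn0Sn n)).

Lemma ord_modE n (i : 'I_n.+1) : ord_mod n i = i.
Proof. by apply: val_inj; rewrite /= modn_small. Qed.

Lemma add5E i k : add5 i k = ord_mod 4 (i + k).
Proof. by apply: val_inj; rewrite /= inordK // ltn_pmod. Qed.

Lemma add3E j k : add3 j k = ord_mod 2 (j + k).
Proof. by apply: val_inj; rewrite /= inordK // ltn_pmod. Qed.

Definition code (x : Gr) : nat := x.1 * 5 + x.2.
Definition decode (c : nat) : Gr := (ord_mod 2 (c %/ 5), ord_mod 4 c).

Lemma codeK : cancel code decode.
Proof.
case=> j i; have ltj := ltn_ord j; have lti := ltn_ord i.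
by congr pair; apply: val_inj; rewrite /= /code /=; lia.
Qed.

Lemma code_lt x : code x < 15.
Proof. by case: x => j i; have := ltn_ord j; have := ltn_ord i; rewrite /code /=; lia. Qed.

Definition ground : seq Gr := map decode (iota 0 15).

Lemma mem_ground x : x \in ground.
Proof. by rewrite -(codeK x) map_f // mem_iota code_lt. Qed.

Definition Idx := (Gr * 'I_5)%type.

Definition member_list (t : Idx) : seq Gr :=
  let: ((j, i), i') := t in let j' := ord_mod 2 (j + 1) in
  [:: (j, i); (j, ord_mod 4 (i + 1));
      (j', i'); (j', ord_mod 4 (i' + 1)); (j', ord_mod 4 (i' + 3))].

Definition member (t : Idx) : {set Gr} := [set x in member_list t].

Definition indices : seq Idx := [seq (x, ord_mod 4 i) | x <- ground, i <- iota 0 5].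

Lemma mem_indices t : t \in indices.
Proof.
case: t => x i; rewrite -(ord_modE i); apply: allpairs_f; first exact: mem_ground.
by rewrite mem_iota ltn_ord.
Qed.

Lemma Hfam_member : Hfam = [set member t | t : Idx].
Proof.
apply/setP => A; apply/bigcupP/imsetP => [[j _ /imset2P[P R]] | [[[j i] i'] _ ->]].
- case/imsetP=> i _ -> /imsetP[i' _ ->] ->; exists ((j, i), i') => //.
  by apply/setP => x; rewrite !inE !add5E !add3E !orbA.
- exists j => //; apply/imset2P; exists [set (j, i); (j, add5 i 1)]
    [set (add3 j 1, i'); (add3 j 1, add5 i' 1); (add3 j 1, add5 i' 3)].
  + exact: imset_f.
  + exact: imset_f.
  by apply/setP => x; rewrite !inE !add5E !add3E !orbA.
Qed.

Lemma indices_uniq : uniq indices.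
Proof. by vm_compute. Qed.

Lemma member_lists_uniq : all (fun t => uniq (member_list t)) indices.
Proof. by vm_compute. Qed.

Lemma member_lists_meet :
  all (fun t => all (fun u => has (mem (member_list u)) (member_list t)) indices) indices.
Proof. by vm_compute. Qed.

Lemma member_lists_differ :
  all (fun t => all (fun u =>
    (t == u) || has (predC (mem (member_list u))) (member_list t)) indices) indices.
Proof. by vm_compute. Qed.

Definition member_codes : seq (seq nat) := [seq map code (member_list t) | t <- indices].

Lemma avoid_sorted_quadruples :
  all (fun a => all (fun b => all (fun c => all (fun d =>
    6 <= count (fun m => all (fun e => e \notin [:: a; b; c; d]) m) member_codes)
  (iota c (15 - c))) (iota b (15 - b))) (iota a (15 - a))) (iota 0 15).
Proof. by vm_compute. Qed.

(* The 5-set {0.0, 0.2, 0.4} u {2.0, 2.1} is a cover: {0, 2, 4} meets every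
   edge of P_0 and every triangle of R_0, and {0, 1} meets every triangle of
   R_2, so every member of each of the three products is met. *)
Definition transversal : seq Gr := map decode [:: 0; 2; 4; 10; 11].

Lemma transversal_uniq : uniq transversal.
Proof. by vm_compute. Qed.

Lemma transversal_meets : all (fun t => has (mem transversal) (member_list t)) indices.
Proof. by vm_compute. Qed.

Lemma member_inj : injective member.
Proof.
move=> t u eq_tu; apply/eqP; apply: contraT => neq_tu.
have /allP/(_ t (mem_indices t))/allP/(_ u (mem_indices u)) := member_lists_differ.
rewrite (negbTE neq_tu) => /hasP[x xt /negP[]].
have : x \in member u by rewrite -eq_tu inE.
by rewrite inE.
Qed.

Lemma card_member t : #|member t| = 5.
Proof.
rewrite cardsE; have /card_uniqP -> := allP member_lists_uniq t (mem_indices t).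
by case: t => [[j i] i'].
Qed.

Lemma member_meet t u : member t :&: member u != set0.
Proof.
have /allP/(_ t (mem_indices t))/allP/(_ u (mem_indices u))/hasP[x xt xu] :=
  member_lists_meet.
by apply/set0Pn; exists x; rewrite in_setI !in_set xt.
Qed.

Lemma disjoint_member t (Y : {set Gr}) :
  [disjoint member t & Y] = all (fun x => x \notin Y) (member_list t).
Proof.
rewrite disjoint_subset; apply/subsetP/allP => [sub x xt | notY x].
  by have := sub x; rewrite !inE xt => /(_ isT).
by rewrite !inE; exact: notY.
Qed.

Lemma avoid_count_indices (Y : {set Gr}) :
  avoid_count Hfam Y = count (fun t => all (fun x => x \notin Y) (member_list t)) indices.
Proof.
rewrite /avoid_count.
have -> : [set A in Hfam | [disjoint A & Y]] = member @: [set t | [disjoint member t & Y]].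
  apply/setP => A; rewrite Hfam_member inE; apply/andP/imsetP.
  - by case=> /imsetP[t _ ->] disj; exists t; rewrite ?inE.
  - by case=> t; rewrite inE => disj ->; rewrite imset_f.
rewrite card_imset; last exact: member_inj.
rewrite cardsE (card_count _ indices_uniq mem_indices).
by apply: eq_count => t; exact: disjoint_member.
Qed.

(* Every 4-set Y is avoided by at least 6 members: the sorted codes of Y form
   a nondecreasing quadruple covered by [avoid_sorted_quadruples]. *)
Lemma avoid_count_4sets (Y : {set Gr}) : #|Y| = 4 -> 6 <= avoid_count Hfam Y.
Proof.
move=> cardY; rewrite avoid_count_indices.
set s := sort leq (map code (enum Y)).
have mem_s x : (code x \in s) = (x \in Y).
  by rewrite mem_sort (mem_map (can_inj codeK)) mem_enum.
have size_s : size s = 4 by rewrite size_sort size_map -cardE.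
have sorted_s : sorted leq s by apply: sort_sorted; exact: leq_total.
have small_s : all (fun e => e < 15) s.
  by apply/allP => e; rewrite mem_sort => /mapP[x _ ->]; exact: code_lt.
have -> : count (fun t => all (fun x => x \notin Y) (member_list t)) indices
        = count (fun m => all (fun e => e \notin s) m) member_codes.
  rewrite count_map; apply: eq_count => t; rewrite /= all_map.
  by apply: eq_all => x; rewrite /= mem_s.
clear mem_s; clearbody s; case: s size_s sorted_s small_s => [|a [|b [|c [|d []]]]] //= _.
move=> /and4P[leab lebc lecd _] /and5P[lta ltb ltc ltd _].
have ina : a \in iota 0 15 by rewrite mem_iota; lia.
have inb : b \in iota a (15 - a) by rewrite mem_iota; lia.
have inc : c \in iota b (15 - b) by rewrite mem_iota; lia.
have ind : d \in iota c (15 - c) by rewrite mem_iota; lia.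
by have /allP/(_ a ina)/allP/(_ b inb)/allP/(_ c inc)/allP/(_ d ind) :=
  avoid_sorted_quadruples.
Qed.

Lemma transversal_cover : Defs.cover Hfam [set x in transversal].
Proof.
apply/forallP => A; apply/implyP; rewrite Hfam_member => /imsetP[t _ ->].
have /hasP[x xt xT] := allP transversal_meets t (mem_indices t).
by apply/set0Pn; exists x; rewrite in_setI !in_set xt.
Qed.

Lemma tau_Hfam : tau Hfam = 5.
Proof.
apply/eqP; rewrite eqn_leq; apply/andP; split.
  have := tau_le_cover transversal_cover.
  by rewrite cardsE; have /card_uniqP -> := transversal_uniq.
apply: tau_gt => [|Y /avoid_count_4sets]; first by rewrite card_prod !card_ord.
exact: leq_trans.
Qed.

Theorem proposition5p9 :
  [/\ uniform 5 Hfam,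
      intersecting Hfam,
      #|Hfam| = 75,
      (forall Y : {set Gr}, #|Y| = 4 -> 6 <= avoid_count Hfam Y)
    & tau Hfam = 5].
Proof.
split.
- by move=> A; rewrite Hfam_member => /imsetP[t _ ->]; exact: card_member.
- by move=> A B; rewrite Hfam_member => /imsetP[t _ ->] /imsetP[u _ ->]; exact: member_meet.
- by rewrite Hfam_member card_imset ?card_prod ?card_ord //; exact: member_inj.
- exact: avoid_count_4sets.
- exact: tau_Hfam.
Qed.
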